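(* Let $T=\begin{pmatrix}1&1\\0&1\end{pmatrix}\in\mathsf{SL}(2,\mathbb{Z})$. Then $$T^{12}=\begin{pmatrix}1&12\\0&1\end{pmatrix}=\left[\begin{pmatrix}1&1\\1&2\end{pmatrix},\begin{pmatrix}3&1\\-1&0\end{pmatrix}\right]^2,$$ so $T^{12}$ is a product of two commutators of elements of $\mathsf{SL}(2,\mathbb{Z})$; moreover there do not exist $X,Y\in\mathsf{SL}(2,\mathbb{Z})$ with $[X,Y]=T^{12}$. Hence the commutator length of $T^{12}$ in $\mathsf{SL}(2,\mathbb{Z})$ equals $2$.
   Context: $[X,Y]=XYX^{-1}Y^{-1}$. The commutator length of an element of $[\mathsf{SL}(2,\mathbb{Z}),\mathsf{SL}(2,\mathbb{Z})]$ is the least number of commutators of elements of $\mathsf{SL}(2,\mathbb{Z})$ whose product is that element. *)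

From HB Require Import structures.
From mathcomp Require Import all_boot all_order all_algebra.
Set Implicit Arguments. Unset Strict Implicit. Unset Printing Implicit Defensive.
Import Order.TTheory GRing.Theory Num.Theory.
Local Open Scope ring_scope.

Definition M2 := 'M[int]_2.

Definition mx2 (a b c d : int) : M2 :=
  \matrix_(i < 2, j < 2)
    if (i == 0 :> nat) then (if (j == 0 :> nat) then a else b)
    else (if (j == 0 :> nat) then c else d).

Definition inSL2 (X : M2) : Prop := \det X = 1.

Definition comm (X Y : M2) : M2 := X * Y * X^-1 * Y^-1.

Definition prod_of_comms (n : nat) (g : M2) : Prop :=
  exists (X Y : 'I_n -> M2),
    (forall i, inSL2 (X i) /\ inSL2 (Y i)) /\
    g = \prod_(i < n) comm (X i) (Y i).

Definition comm_length_eq (g : M2) (n : nat) : Prop :=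
  prod_of_comms n g /\ (forall m, prod_of_comms m g -> (n <= m)%N).

From mathcomp Require Import all_boot all_order all_algebra zify ring.
Set Implicit Arguments.
Unset Strict Implicit.
Unset Printing Implicit Defensive.
Import GRing.Theory.
Local Open Scope ring_scope.

(* If [X Y X^-1 Y^-1 = U] with U = (1 n; 0 1), n <> 0, then X Y X^-1 = U Y, so
   tr Y = tr (U Y) = tr Y + n Y_10 and Y is upper triangular.  Comparing entries
   of X Y = U Y X then forces X to be upper triangular as well; since the only
   units of Z are 1 and -1, both have scalar diagonals, and the top right entries
   give n X_00 Y_00 = 0, which is absurd. *)

Lemma mx2E (X : M2) : X = mx2 (X 0 0) (X 0 1) (X 1 0) (X 1 1).
Proof.
apply/matrixP => i j; rewrite !mxE.
by case: i => [[|[|i]] Hi]; case: j => [[|[|j]] Hj] //=; congr (X _ _); apply/val_inj.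
Qed.

Lemma mx2_inj a b c d a' b' c' d' : mx2 a b c d = mx2 a' b' c' d' ->
  [/\ a = a', b = b', c = c' & d = d'].
Proof.
move=> E; have entry i j := congr1 (fun M : M2 => M i j) E.
by move: (entry 0 0) (entry 0 1) (entry 1 0) (entry 1 1); rewrite !mxE.
Qed.

Lemma mx2M a b c d e f g h :
  mx2 a b c d * mx2 e f g h = mx2 (a*e + b*g) (a*f + b*h) (c*e + d*g) (c*f + d*h).
Proof.
apply/matrixP => i j; rewrite -mulmxE !mxE !big_ord_recl big_ord0 !mxE.
by case: i => [[|[|i]] Hi]; case: j => [[|[|j]] Hj] => //=; rewrite addr0.
Qed.

Lemma mx2_1 : (1 : M2) = mx2 1 0 0 1.
Proof.
by apply/matrixP => i j; rewrite !mxE; case: i => [[|[|i]] Hi]; case: j => [[|[|j]] Hj].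
Qed.

Lemma det_mx2 a b c d : \det (mx2 a b c d) = a*d - b*c.
Proof.
rewrite (expand_det_row _ 0) !big_ord_recl big_ord0 /cofactor !det_mx11 !mxE /=.
by rewrite expr0 expr1 mul1r mulN1r addr0 mulrN.
Qed.

Lemma trace_mx2 a b c d : \tr (mx2 a b c d) = a + d.
Proof. by rewrite /mxtrace !big_ord_recl big_ord0 !mxE addr0. Qed.

Lemma inSL2_unit (X : M2) : inSL2 X -> X \is a GRing.unit.
Proof. by rewrite /inSL2 unitmxE => ->; rewrite unitr1. Qed.

Lemma inv_mx2 a b c d : a*d - b*c = 1 -> (mx2 a b c d)^-1 = mx2 d (-b) (-c) a.
Proof.
move=> det1; have uX : mx2 a b c d \is a GRing.unit by apply: inSL2_unit; rewrite /inSL2 det_mx2.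
apply: (mulrI uX); rewrite mulrV // mx2M mx2_1.
by congr mx2; [rewrite -det1 | | | rewrite -det1]; ring.
Qed.

Lemma unipotent_exp n : mx2 1 1 0 1 ^+ n = mx2 1 n%:R 0 1.
Proof.
elim: n => [|n IH]; first by rewrite expr0 mx2_1.
by rewrite exprS IH mx2M; congr mx2; rewrite ?mulrS; ring.
Qed.

Lemma int_mul_eq1 (u v : int) : u * v = 1 -> u = v.
Proof. by move/mulr1_eq <-. Qed.

Lemma comm_conj (X Y : M2) : Y \is a GRing.unit -> X * Y * X^-1 = comm X Y * Y.
Proof. by move=> uY; rewrite /comm mulrVK. Qed.

Lemma mxtrace_conj (X Y : M2) : X \is a GRing.unit -> \tr (X * Y * X^-1) = \tr Y.
Proof. by move=> uX; rewrite -!mulmxE mxtrace_mulC mulmxA !mulmxE mulVr ?mul1r. Qed.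

Lemma unipotent_neq_comm (n : int) (X Y : M2) :
  n != 0 -> inSL2 X -> inSL2 Y -> comm X Y != mx2 1 n 0 1.
Proof.
move=> n0 SLX SLY; apply/eqP => E.
have [uX uY] := (inSL2_unit SLX, inSL2_unit SLY).
have conjY := comm_conj X uY; rewrite E in conjY.
have trY : \tr (mx2 1 n 0 1 * Y) = \tr Y by rewrite -conjY mxtrace_conj.
have XY : X * Y = mx2 1 n 0 1 * Y * X by rewrite -conjY mulrVK.
move: SLX SLY trY XY; rewrite /inSL2 (mx2E X) (mx2E Y) !det_mx2 !mx2M !trace_mx2.
move: (X 0 0) (X 0 1) (X 1 0) (X 1 1) (Y 0 0) (Y 0 1) (Y 1 0) (Y 1 1).
move=> a b c d e f g h detX detY trY /mx2_inj[E00 E01 E10 E11].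
have g0 : g = 0 by apply: (mulfI n0); lia.
subst g; rewrite mulr0 subr0 in detY.
have c0 : c = 0.
  have hc0 : h * c = 0 by apply: (mulfI n0); lia.
  by rewrite -[c]mul1r -detY -mulrA hc0 mulr0.
subst c; rewrite mulr0 subr0 in detX.
have [ad eh] := (int_mul_eq1 detX, int_mul_eq1 detY); subst d h.
have nea0 : n * (e * a) = 0 by lia.
have : n = n * (e * a) * (e * a) by rewrite -mulrA mulrACA detY detX !mulr1.
by rewrite nea0 mul0r; apply/eqP.
Qed.

Lemma prod_of_comms_exp (n : nat) (A B : M2) :
  inSL2 A -> inSL2 B -> prod_of_comms n (comm A B ^+ n).
Proof.
move=> SLA SLB; exists (fun=> A), (fun=> B).
by split=> [//|]; rewrite prodr_const card_ord.
Qed.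

Lemma prod_of_comms0 (g : M2) : prod_of_comms 0 g -> g = 1.
Proof. by case=> X [Y [_ ->]]; rewrite big_ord0. Qed.

Lemma prod_of_comms1 (g : M2) :
  prod_of_comms 1 g -> exists X Y : M2, inSL2 X /\ inSL2 Y /\ comm X Y = g.
Proof.
case=> X [Y [SLXY ->]]; have [SLX SLY] := SLXY ord0.
by exists (X ord0), (Y ord0); rewrite big_ord1.
Qed.

Lemma comm_length_eq2 (g : M2) :
  prod_of_comms 2 g -> g != 1 ->
  ~ (exists X Y : M2, inSL2 X /\ inSL2 Y /\ comm X Y = g) ->
  comm_length_eq g 2.
Proof.
move=> g2 g_neq1 not_comm; split=> // [[|[|m]]] // gm.
  by move/eqP: g_neq1; rewrite (prod_of_comms0 gm).
by case: not_comm; apply: prod_of_comms1.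
Qed.

Theorem mainTheorem9 :
  let T := mx2 1 1 0 1 in
  let A := mx2 1 1 1 2 in
  let B := mx2 3 1 (-1) 0 in
  (inSL2 T /\ inSL2 A /\ inSL2 B) /\
  T ^+ 12 = mx2 1 12 0 1 /\
  T ^+ 12 = (comm A B) ^+ 2 /\
  ~ (exists X Y : M2, inSL2 X /\ inSL2 Y /\ comm X Y = T ^+ 12) /\
  comm_length_eq (T ^+ 12) 2.
Proof.
move=> T A B.
have SLT : inSL2 T by rewrite /inSL2 det_mx2.
have SLA : inSL2 A by rewrite /inSL2 det_mx2.
have SLB : inSL2 B by rewrite /inSL2 det_mx2.
have T12 : T ^+ 12 = mx2 1 12 0 1 by rewrite unipotent_exp.
have AB2 : comm A B ^+ 2 = mx2 1 12 0 1 by rewrite /comm !inv_mx2 // expr2 !mx2M.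
have not_comm : ~ (exists X Y : M2, inSL2 X /\ inSL2 Y /\ comm X Y = T ^+ 12).
  case=> X [Y [SLX [SLY E]]].
  by move: (unipotent_neq_comm (n := 12) isT SLX SLY); rewrite E T12 eqxx.
have T12_neq1 : T ^+ 12 != 1 by rewrite T12 mx2_1; apply/eqP => /mx2_inj[].
have T12_comms : prod_of_comms 2 (T ^+ 12) by rewrite T12 -AB2; apply: prod_of_comms_exp.
split; first by [].
split; first exact: T12.
split; first by rewrite T12 AB2.
split; first exact: not_comm.
exact: comm_length_eq2.
Qed.
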